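(* Let $a=a_0+a_1e_1+a_2e_2+a_3e_3$ and $b=b_0+b_1e_1+b_2e_2+b_3e_3$ be nonzero elements of $C\ell_2$, let $U=\mathrm{diag}(1,-1,-1,-1)$ and $W(a,b)=L(a)-R(b)U$. Then the eigenvalues of $W(a,b)$ are $$\lambda_{1,2}=a_0\pm\sqrt{G(a)+H_b},\qquad \lambda_{3,4}=a_0+b_0\pm\sqrt{G(a)+G(b)+2(-a_1b_1-a_2b_2+a_3b_3)},$$ and $$\det(W(a,b))=(H_a-H_b)\big(H_a+H_b+2(a_0b_0+a_1b_1+a_2b_2-a_3b_3)\big)=(H_a-H_b)H_{\bar a+b}.$$
   Context: $C\ell_2$ is the 4-dimensional real associative algebra with basis $1,e_1,e_2,e_3$ and multiplication $e_1^2=e_2^2=1$, $e_3^2=-1$, $e_1e_2=e_3=-e_2e_1$, $e_1e_3=e_2=-e_3e_1$, $e_3e_2=e_1=-e_2e_3$. For $a=a_0+a_1e_1+a_2e_2+a_3e_3$ ($a_i\in\mathbb{R}$): $\bar a=a_0-a_1e_1-a_2e_2-a_3e_3$, $H_a=a_0^2-a_1^2-a_2^2+a_3^2$, $G(a)=a_1^2+a_2^2-a_3^2$, $$L(a)=\begin{pmatrix} a_0&a_1&a_2&-a_3\\ a_1&a_0&a_3&-a_2\\ a_2&-a_3&a_0&a_1\\ a_3&-a_2&a_1&a_0\end{pmatrix},\qquad R(a)=\begin{pmatrix} a_0&a_1&a_2&-a_3\\ a_1&a_0&-a_3&a_2\\ a_2&a_3&a_0&-a_1\\ a_3&a_2&-a_1&a_0\end{pmatrix}.$$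 (Square roots are complex when the radicand is negative.) The equation $ax=\bar x b$ is equivalent to $W(a,b)\overrightarrow{x}=0$, with $\overrightarrow{x}=(x_0,x_1,x_2,x_3)^T$. *)

From HB Require Import structures.
From mathcomp Require Import all_boot all_order all_algebra.
From mathcomp Require Export complex.
Set Implicit Arguments. Unset Strict Implicit. Unset Printing Implicit Defensive.
Import Order.TTheory GRing.Theory Num.Theory.
Local Open Scope ring_scope.

(* An element a = a0 + a1 e1 + a2 e2 + a3 e3 of Cl_2 is represented by its
   coordinate vector, a function 'I_4 -> R; a`0 .. a`3 below. *)
Definition Cl2 (R : rcfType) := 'I_4 -> R.

Section Cl2Defs.
Variable R : rcfType.
Implicit Types a b : Cl2 R.

Definition c0 a := a (@Ordinal 4 0 isT).
Definition c1 a := a (@Ordinal 4 1 isT).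
Definition c2 a := a (@Ordinal 4 2 isT).
Definition c3 a := a (@Ordinal 4 3 isT).

Definition cl2_nonzero a := exists i, a i != 0.

Definition cl2_conj a : Cl2 R := fun i => if val i == 0%N then a i else - a i.
Definition cl2_add a b : Cl2 R := fun i => a i + b i.

Definition Hf a := c0 a ^+ 2 - c1 a ^+ 2 - c2 a ^+ 2 + c3 a ^+ 2.
Definition Gf a := c1 a ^+ 2 + c2 a ^+ 2 - c3 a ^+ 2.


Definition Lmx a : 'M[R]_4 :=
  let a0 := c0 a in let a1 := c1 a in let a2 := c2 a in let a3 := c3 a in
  \matrix_(i < 4, j < 4)
   nth 0 (nth [::] [:: [:: a0; a1; a2; -a3];
                       [:: a1; a0; a3; -a2];
                       [:: a2; -a3; a0; a1];
                       [:: a3; -a2; a1; a0]] i) j.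

Definition Rmx a : 'M[R]_4 :=
  let a0 := c0 a in let a1 := c1 a in let a2 := c2 a in let a3 := c3 a in
  \matrix_(i < 4, j < 4)
   nth 0 (nth [::] [:: [:: a0; a1; a2; -a3];
                       [:: a1; a0; -a3; a2];
                       [:: a2; a3; a0; -a1];
                       [:: a3; a2; -a1; a0]] i) j.

Definition Umx : 'M[R]_4 :=
  \matrix_(i < 4, j < 4) (if i == j then (if val i == 0%N then 1 else -1) else 0).

Definition Wmx a b : 'M[R]_4 := Lmx a - Rmx b *m Umx.

Definition rsqrtC (x : R) : R[i] :=
  if 0 <= x then real_complex R (Num.sqrt x) else Complex 0 (Num.sqrt (- x)).

End Cl2Defs.

(* Each entry of W(a, b) is +-a_i +- b_j, and cofactor expansion gives
   det W(a, b) = (H_a - H_b) (H_a + H_b + 2 (a0 b0 + a1 b1 + a2 b2 - a3 b3))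
   over any commutative ring.  Since W is linear in (a, b) with W(1, 0) = 1, we
   have X - W(a, b) = W(X - a, -b), so the characteristic polynomial is the same
   formula at (X - a, -b): the product of (X - a0)^2 - (G(a) + H_b) and
   (X - a0 - b0)^2 - (G(a) + G(b) - 2 (a1 b1 + a2 b2 - a3 b3)), each of which
   splits over C with the complex square root. *)

From HB Require Import structures.
From mathcomp Require Import all_boot all_order all_algebra.
From mathcomp Require Import complex.
From mathcomp Require Import ring.
Set Implicit Arguments.
Unset Strict Implicit.
Unset Printing Implicit Defensive.
Import Order.TTheory GRing.Theory Num.Theory.
Local Open Scope ring_scope.

Section Wcoords.
Variable T : comNzRingType.

Definition Hform (x0 x1 x2 x3 : T) := x0 ^+ 2 - x1 ^+ 2 - x2 ^+ 2 + x3 ^+ 2.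

Definition Wcoords (a0 a1 a2 a3 b0 b1 b2 b3 : T) : 'M[T]_4 :=
  \matrix_(i < 4, j < 4)
   nth 0 (nth [::] [:: [:: a0 - b0; a1 + b1; a2 + b2; - a3 - b3];
                       [:: a1 - b1; a0 + b0; a3 - b3; - a2 + b2];
                       [:: a2 - b2; - a3 + b3; a0 + b0; a1 - b1];
                       [:: a3 - b3; - a2 + b2; a1 - b1; a0 + b0]] i) j.

Lemma det_Wcoords a0 a1 a2 a3 b0 b1 b2 b3 :
  \det (Wcoords a0 a1 a2 a3 b0 b1 b2 b3)
    = (Hform a0 a1 a2 a3 - Hform b0 b1 b2 b3)
      * (Hform a0 a1 a2 a3 + Hform b0 b1 b2 b3
         + 2 * (a0 * b0 + a1 * b1 + a2 * b2 - a3 * b3)).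
Proof.
rewrite (expand_det_row _ ord0) !big_ord_recl big_ord0 /cofactor.
do 2!rewrite !(expand_det_row _ ord0) !big_ord_recl !big_ord0 /cofactor.
by rewrite !det_mx11 !mxE /= /Hform; ring.
Qed.

End Wcoords.

Section WcoordsCharPoly.
Variable T : comNzRingType.

Lemma char_poly_mx_Wcoords (a0 a1 a2 a3 b0 b1 b2 b3 : T) :
  char_poly_mx (Wcoords a0 a1 a2 a3 b0 b1 b2 b3)
    = Wcoords ('X - a0%:P) (- a1%:P) (- a2%:P) (- a3%:P)
              (- b0%:P) (- b1%:P) (- b2%:P) (- b3%:P).
Proof.
apply/matrixP => i j; rewrite !mxE.
by case: i j => [[|[|[|[|?]]]] ?] [[|[|[|[|?]]]] ?] //=;
  rewrite ?mulr1n ?mulr0n ?sub0r ?(rmorphB, rmorphD, rmorphN) /=; ring.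
Qed.

Lemma sqr_subXC_factor (x s y : T) :
  s ^+ 2 = y -> ('X - x%:P) ^+ 2 - y%:P = ('X - (x + s)%:P) * ('X - (x - s)%:P).
Proof. by move=> <-; rewrite rmorphXn rmorphD rmorphB; ring. Qed.

End WcoordsCharPoly.

Section Cl2Facts.
Variable R : rcfType.
Implicit Types a b : Cl2 R.

Lemma WmxE a b :
  Wmx a b = Wcoords (c0 a) (c1 a) (c2 a) (c3 a) (c0 b) (c1 b) (c2 b) (c3 b).
Proof.
apply/matrixP => i j; rewrite !mxE !big_ord_recl big_ord0 !mxE.
by case: i j => [[|[|[|[|?]]]] ?] [[|[|[|[|?]]]] ?] //=; ring.
Qed.

Lemma det_Wmx a b :
  \det (Wmx a b)
    = (Hf a - Hf b)
      * (Hf a + Hf b + 2 * (c0 a * c0 b + c1 a * c1 b + c2 a * c2 b - c3 a * c3 b)).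
Proof. by rewrite WmxE det_Wcoords. Qed.

Lemma Hf_conj_add a b :
  Hf (cl2_add (cl2_conj a) b)
    = Hf a + Hf b + 2 * (c0 a * c0 b + c1 a * c1 b + c2 a * c2 b - c3 a * c3 b).
Proof. by rewrite /Hf /c0 /c1 /c2 /c3 /cl2_add /cl2_conj /=; ring. Qed.

Lemma char_poly_Wmx a b :
  char_poly (Wmx a b)
    = (('X - (c0 a)%:P) ^+ 2 - (Gf a + Hf b)%:P)
      * (('X - (c0 a + c0 b)%:P) ^+ 2
         - (Gf a + Gf b + 2 * (- (c1 a * c1 b) - c2 a * c2 b + c3 a * c3 b))%:P).
Proof.
rewrite /char_poly WmxE char_poly_mx_Wcoords det_Wcoords /Hform /Gf /Hf.
by rewrite !(rmorphD, rmorphB, rmorphN, rmorphM, rmorphXn, rmorph_nat); ring.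
Qed.

Lemma rsqrtC_sqr (x : R) : rsqrtC x ^+ 2 = real_complex R x.
Proof.
rewrite /rsqrtC; case: ifP => [x_ge0 | /negbT x_lt0].
  by rewrite -rmorphXn sqr_sqrtr.
have Nx_ge0 : 0 <= - x by rewrite oppr_ge0 ltW // ltNge.
apply/eqP; rewrite expr2 eq_complex /= !mulr0 !mul0r -expr2 sqr_sqrtr //.
by rewrite sub0r opprK add0r !eqxx.
Qed.

End Cl2Facts.

Theorem proposition5p7 (R : rcfType) (a b : Cl2 R) :
  cl2_nonzero a -> cl2_nonzero b ->
  let s1 := rsqrtC (Gf a + Hf b) in
  let s2 := rsqrtC (Gf a + Gf b
                    + 2 * (- (c1 a * c1 b) - c2 a * c2 b + c3 a * c3 b)) in
  let lam1 := real_complex R (c0 a) + s1 in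
  let lam2 := real_complex R (c0 a) - s1 in
  let lam3 := real_complex R (c0 a + c0 b) + s2 in
  let lam4 := real_complex R (c0 a + c0 b) - s2 in
  char_poly (map_mx (real_complex R) (Wmx a b))
    = \prod_(l <- [:: lam1; lam2; lam3; lam4]) ('X - l%:P)
  /\ \det (Wmx a b)
       = (Hf a - Hf b)
         * (Hf a + Hf b + 2 * (c0 a * c0 b + c1 a * c1 b + c2 a * c2 b - c3 a * c3 b))
  /\ \det (Wmx a b) = (Hf a - Hf b) * Hf (cl2_add (cl2_conj a) b).
Proof.
move=> _ _ s1 s2 lam1 lam2 lam3 lam4.
split; last by rewrite !det_Wmx Hf_conj_add.
rewrite -map_char_poly char_poly_Wmx rmorphM !rmorphB !rmorphXn.
rewrite /= !map_polyXsubC !map_polyC.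
rewrite (sqr_subXC_factor _ (rsqrtC_sqr _)) (sqr_subXC_factor _ (rsqrtC_sqr _)).
by rewrite !big_cons big_nil mulr1 mulrA.
Qed.
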